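(* For compiler constructions that are context-free (i.e., may be embedded in a context that reads all locations, so that offset synchronization at every control path join is necessary) and that conform to the principle that every machine code instruction that writes introduces maximal entropy, the entropy of the runtime trace is maximal among all ways of (randomly) varying the embedded constants in the machine code that preserve correctness of the compiled program.
   Context: Setting (encrypted computing with chaotic compilation). A processor computes on encrypted 32-bit words. The compiler is stochastic: recompiling the same source produces machine code and runtime traces of identical structure, differing only in encrypted constants embedded in instructions. At each program point the compiler maintains an obfuscation scheme assigning to every register and memory location $l$ an offset $\Delta l\in\mathbb{Z}/2^{32}$, the plaintext stored in $l$ at runtime being the nominal (programmer-intended) value plus $\Delta l$ mod $2^{32}$; each arithmetic instruction's embedded constant can set the offset of its target location to any value. The trace is the runtime sequence of writes to locations (viewed at the level of plaintexts beneath the encryption), a random variable over recompilations, with entropy $\mathbb{E}[-\log_2 f_T]$ where $f_T$ is its distribution. Correctness forces: copy instructions preserve data exactly, and where control paths join (loop ends, after conditionals, subroutine returns, goto targets) each location's offset must coincide on all joining paths. The principle ''every instruction that writes introduces maximal entropy'' means each arithmetic instruction that writes chooses the new offset of its target uniformly at random and independently of all other choices, subject only to these correctness constraints (the last writes to a location before a join on each path, called trailer instructions, share one common random offset), and input offsets (for locations read before being written) are uniform and independent. *)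

From HB Require Import structures.
From mathcomp Require Import all_boot all_order all_algebra.
From mathcomp Require Import reals exp.
Set Implicit Arguments. Unset Strict Implicit. Unset Printing Implicit Defensive.
Import Order.TTheory GRing.Theory Num.Theory.
Local Open Scope ring_scope.

(* - [W] : finite type of "offset sources": the arithmetic (writing)
     instructions of the machine code, each of which sets the offset of its
     target via its embedded constant, together with the input locations
     (locations read before being written), whose offsets are also random.
   - [trailer : rel W] : correctness constraints at control-path joins:
     [trailer a b] means a and b are trailer instructions (last writes to one
     location before a join, on joining paths) and so must set the same offset.
   - [n] : length of the runtime trace (number of writes in the run),
     [src i] : the source whose chosen offset is carried (through copy
     instructions, which preserve data exactly) by the i-th write of the trace,
     [nominal i] : the nominal (programmer-intended) value of the i-th write. *)

Definition wbits : nat := 32%N.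
Definition word := 'Z_(2 ^ wbits)%N.

(* an assignment of offsets to all sources = one compilation *)
Definition offsets (W : finType) := {ffun W -> word}.

Definition correct (W : finType) (trailer : rel W) (x : offsets W) : bool :=
  [forall a, forall b, trailer a b ==> (x a == x b)].

Definition trace (W : finType) (n : nat) (nominal : 'I_n -> word)
  (src : 'I_n -> W) (x : offsets W) : {ffun 'I_n -> word} :=
  [ffun i => nominal i + x (src i)].

Definition is_distr (R : realType) (T : finType) (f : {ffun T -> R}) : Prop :=
  (forall t, 0 <= f t) /\ \sum_(t : T) f t = 1.

(* Shannon entropy in bits, E[-log2 f_T] (with 0 log 0 = 0) *)
Definition entropy (R : realType) (T : finType) (f : {ffun T -> R}) : R :=
  \sum_(t : T) f t * (- (ln (f t) / ln 2)).

Definition trace_distr (R : realType) (W : finType) (n : nat)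
  (nominal : 'I_n -> word) (src : 'I_n -> W) (mu : {ffun offsets W -> R})
  : {ffun {ffun 'I_n -> word} -> R} :=
  [ffun t => \sum_(x : offsets W | trace nominal src x == t) mu x].

(* "every instruction that writes introduces maximal entropy": all sources
   choose offsets uniformly and independently, subject only to the correctness
   constraints (trailers share a common random offset), i.e. i.i.d. uniform
   offsets conditioned on correctness = uniform on the correct assignments. *)
Definition maxent_distr (R : realType) (W : finType) (trailer : rel W)
  : {ffun offsets W -> R} :=
  [ffun x => if correct trailer x
             then (#|[pred y | correct trailer y]|%:R)^-1 else 0].

From HB Require Import structures.
From mathcomp Require Import all_boot all_order all_algebra.
From mathcomp Require Import reals exp.
From mathcomp Require Import lra.
Set Implicit Arguments. Unset Strict Implicit. Unset Printing Implicit Defensive.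
Import Order.TTheory GRing.Theory Num.Theory.
Local Open Scope ring_scope.

(* The correct offset assignments form a subgroup H of the offset space, and
   the maximal-entropy compiler draws uniformly from H.  Translation by an
   element of H preserves that distribution and shifts traces injectively, so
   all traces it can produce are equally likely, and every correct compiler
   produces only such traces.  A distribution supported inside the support of a
   uniform distribution has no larger entropy, by [ln x <= x - 1]. *)

Section Entropy.
Variables (R : realType) (T : finType).
Implicit Types (f g : {ffun T -> R}) (c : R).

Lemma entropyE f : entropy f = (\sum_t f t * - ln (f t)) / ln 2.
Proof. by rewrite /entropy mulr_suml; apply: eq_bigr => t _; rewrite -mulNr mulrA. Qed.

Lemma distr_ex_gt0 f : is_distr f -> exists t, 0 < f t.
Proof.
move=> [f0 f1]; have /psumr_neq0P[|t /andP[_ ft]] : \sum_t f t <> 0.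
- by rewrite f1; apply/eqP; rewrite oner_eq0.
- by move=> t _; apply: f0.
by exists t.
Qed.

Lemma entropy_uniform_support f c :
  is_distr f -> (forall t, f t != 0 -> f t = c) -> entropy f = - ln c / ln 2.
Proof.
move=> [_ f1] fc; rewrite entropyE (eq_bigr (fun t => f t * - ln c)).
  by rewrite -mulr_suml f1 mul1r.
by move=> t _; have [->|/fc ->] := eqVneq (f t) 0; rewrite ?mul0r.
Qed.

Lemma entropy_le_ln_inv g c :
  is_distr g -> 0 < c -> \sum_(t | g t != 0) c <= 1 -> entropy g <= - ln c / ln 2.
Proof.
move=> [g0 g1] c_gt0 supp_le1; rewrite entropyE ler_wpM2r ?invr_ge0 ?ln_ge0 ?ler1n //.
(* [g ln (c / g) <= c - g], from [ln x <= x - 1] *)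
have gibbs t : g t * - ln (g t) <= (if g t != 0 then c else 0) - g t - g t * ln c.
  have [->|gt_neq0] := eqVneq (g t) 0; first by rewrite !mul0r !subr0.
  have gt_gt0 : 0 < g t by rewrite lt_def gt_neq0 g0.
  have ratio_gt0 : 0 < c / g t by rewrite divr_gt0.
  have := @le_ln1Dx _ (c / g t - 1); rewrite subrKC => /(_ ltac:(lra)).
  rewrite ln_div ?posrE // => /(ler_wpM2l (ltW gt_gt0)).
  by rewrite /= mulrBr mulrBr mulrCA divff ?mulr1 //; lra.
apply: le_trans (ler_sum _ (fun t _ => gibbs t)) _.
by rewrite !sumrB -big_mkcond -mulr_suml g1 mul1r; lra.
Qed.

Lemma entropy_le_uniform_support g f :
  is_distr g -> is_distr f ->
  (forall s t, f s != 0 -> f t != 0 -> f s = f t) ->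
  (forall t, g t != 0 -> f t != 0) ->
  entropy g <= entropy f.
Proof.
move=> g_distr f_distr f_unif g_sub_f; have [t0 ft0_gt0] := distr_ex_gt0 f_distr.
have fc t : f t != 0 -> f t = f t0 by move=> ft; apply: f_unif; rewrite // gt_eqF.
rewrite (entropy_uniform_support f_distr fc) entropy_le_ln_inv //.
case: f_distr => f0 <-; rewrite big_mkcond; apply: ler_sum => t _.
by case: ifP => [/g_sub_f/fc -> //|_]; apply: f0.
Qed.

End Entropy.

Section Trace.
Variables (W : finType) (trailer : rel W) (n : nat).
Variables (nominal : 'I_n -> word) (src : 'I_n -> W).
Local Notation correct := (correct trailer).
Local Notation trace := (trace nominal src).
Implicit Types (x y d : offsets W).

Lemma correct0 : correct 0.
Proof. by apply/forallP => a; apply/forallP => b; rewrite !ffunE eqxx implybT. Qed.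

Lemma correctB x y : correct x -> correct y -> correct (x - y).
Proof.
move=> /forallP cx /forallP cy; apply/forallP => a; apply/forallP => b.
apply/implyP => ab; have /implyP/(_ ab)/eqP xab := forallP (cx a) b.
have /implyP/(_ ab)/eqP yab := forallP (cy a) b.
by rewrite !ffunE xab yab.
Qed.

Lemma correctDr d x : correct d -> correct (x + d) = correct x.
Proof.
move=> cd; have cNd : correct (- d) by rewrite -sub0r; apply: correctB correct0 cd.
apply/idP/idP => [cxd | cx]; first by rewrite -(addrK d x); apply: correctB.
by rewrite -[d]opprK; apply: correctB.
Qed.

Lemma eq_traceDr d x y : (trace (x + d) == trace (y + d)) = (trace x == trace y).
Proof.
apply/eqP/eqP => /ffunP eq_xy; apply/ffunP => i.
  by apply: (@addIr _ (d (src i))); have := eq_xy i; rewrite !ffunE !addrA.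
by have := eq_xy i; rewrite !ffunE !addrA => ->.
Qed.

Variable R : realType.
Implicit Types (mu : {ffun offsets W -> R}) (t : {ffun 'I_n -> word}).
Local Notation maxent := (maxent_distr R trailer).

Lemma trace_distr_sum mu : \sum_t trace_distr nominal src mu t = \sum_x mu x.
Proof.
under eq_bigr do rewrite ffunE big_mkcond.
rewrite exchange_big; apply: eq_bigr => x _.
rewrite (bigD1 (trace x)) //= eqxx big1 ?addr0 // => t.
by rewrite eq_sym => /negbTE ->.
Qed.

Lemma trace_distr_is_distr mu : is_distr mu -> is_distr (trace_distr nominal src mu).
Proof.
move=> [mu0 mu1]; split; last by rewrite trace_distr_sum.
by move=> t; rewrite ffunE sumr_ge0.
Qed.

Lemma trace_distr_support mu t :
  trace_distr nominal src mu t != 0 -> exists2 x, mu x != 0 & trace x = t.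
Proof.
move=> mu_t; have /existsP[x /andP[/eqP <- mu_x]] :
    [exists x, (trace x == t) && (mu x != 0)].
  apply: contraNT mu_t => /existsPn mu_t0; rewrite ffunE big1 // => x tx.
  by apply/eqP; have := mu_t0 x; rewrite tx negbK.
by exists x.
Qed.

Lemma card_correct_gt0 : (0 < #|[pred y | correct y]|)%N.
Proof. by apply/card_gt0P; exists 0; apply: correct0. Qed.

Lemma maxent_distr_ge0 x : 0 <= maxent x.
Proof. by rewrite ffunE; case: ifP => // _; rewrite invr_ge0 ler0n. Qed.

Lemma maxent_distr_neq0 x : (maxent x != 0) = correct x.
Proof.
rewrite ffunE; case: ifP; rewrite ?eqxx // => _.
by rewrite invr_eq0 pnatr_eq0 -lt0n card_correct_gt0.
Qed.

Lemma maxent_distr_is_distr : is_distr maxent.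
Proof.
split; first exact: maxent_distr_ge0.
under eq_bigr do rewrite ffunE.
rewrite -(big_mkcond [pred y | correct y]) sumr_const.
by rewrite -[_^-1 *+ _]mulr_natr mulVf // pnatr_eq0 -lt0n card_correct_gt0.
Qed.

Lemma maxent_distrDr d x : correct d -> maxent (x + d) = maxent x.
Proof. by move=> cd; rewrite !ffunE correctDr. Qed.

Lemma maxent_trace_distr_neq0 x :
  correct x -> trace_distr nominal src maxent (trace x) != 0.
Proof.
rewrite -maxent_distr_neq0 => mx; rewrite ffunE (bigD1 x) //=.
rewrite gt_eqF // ltr_pwDl ?lt_def ?mx ?maxent_distr_ge0 //.
by rewrite sumr_ge0 // => y _; apply: maxent_distr_ge0.
Qed.

(* translation by [x - y] maps the compilations producing [trace y] onto those
   producing [trace x], and preserves [maxent] *)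
Lemma maxent_trace_distr_shift x y : correct x -> correct y ->
  trace_distr nominal src maxent (trace x) = trace_distr nominal src maxent (trace y).
Proof.
move=> cx cy; have cxy : correct (x - y) by apply: correctB.
rewrite !ffunE (reindex_inj (addIr (x - y))) /=.
have -> : trace x = trace (y + (x - y)) by rewrite subrKC.
by apply: eq_big => [z|z _]; rewrite ?eq_traceDr ?maxent_distrDr.
Qed.

End Trace.

Theorem proposition1 (R : realType) (W : finType) (trailer : rel W) (n : nat)
  (nominal : 'I_n -> word) (src : 'I_n -> W) (mu : {ffun offsets W -> R}) :
  is_distr mu ->
  (forall x : offsets W, mu x != 0 -> correct trailer x) ->
  entropy (trace_distr nominal src mu)
    <= entropy (trace_distr nominal src (maxent_distr R trailer)).
Proof.
move=> mu_distr mu_correct.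
apply: entropy_le_uniform_support.
- exact: trace_distr_is_distr.
- exact/trace_distr_is_distr/maxent_distr_is_distr.
- move=> _ _ /trace_distr_support[x + <-] /trace_distr_support[y + <-].
  rewrite !maxent_distr_neq0; exact: maxent_trace_distr_shift.
- move=> _ /trace_distr_support[x /mu_correct cx <-].
  exact: maxent_trace_distr_neq0.
Qed.
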